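(* Let $\beta$ be a basis set in $x_1,\dots,x_r$ over an algebraically closed field $k$, and let $c^{\mathbf d}_{\mathbf j}$ be an arrow such that $\mathbf x^{\mathbf d}$ is a minimal generator of $I_\beta$ and $\mathbf x^{\mathbf j}$ is a maximal element of $\beta$ under divisibility. Then $c^{\mathbf d}_{\mathbf j}$ cannot be translated except to itself, and $c^{\mathbf d}_{\mathbf j}$ belongs to every set $\mathcal B$ of arrows whose images form a $k$-basis of $M/M^2$.
   Context: Monomials are identified with exponent vectors. A basis set is a finite nonempty set $\beta$ of monomials closed under taking divisors; $I_\beta$ is the ideal generated by monomials not in $\beta$, $n=|\beta|$. $\mathbf H^n$ is the Hilbert scheme of $n$ points of $\mathbb A^r_k$, $t_\beta$ the point of $I_\beta$, $U_\beta$ the open affine subscheme of points $t$ with $\beta$ a $k$-basis of $k[\mathbf x]/I_t$, $R$ its coordinate ring; for $\mathbf x^{\mathbf d}\notin\beta$, $\mathbf x^{\mathbf j}\in\beta$, $c^{\mathbf d}_{\mathbf j}\in R$ is given by $\mathbf x^{\mathbf d}-\sum_{\mathbf j\in\beta}c^{\mathbf d}_{\mathbf j}(t)\mathbf x^{\mathbf j}\in I_t$; $M$ is the maximal ideal of $t_\beta$ in $R$. An arrow is a pair $(\mathbf d,\mathbf j)$ with tail $\mathbf x^{\mathbf d}\notin\beta$ and head $\mathbf x^{\mathbf j}\in\beta$, identified with $c^{\mathbf d}_{\mathbf j}$. A translation step replaces $(\mathbf d,\mathbf j)$ by $(\mathbf d\pm e_i,\mathbf j\pm e_i)$ provided the result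 is again an arrow (nonnegative exponents, head in $\beta$, tail not in $\beta$). *)

From HB Require Import structures.
From mathcomp Require Import all_boot all_order all_algebra.
From mathcomp Require Import mpoly.
From Stdlib Require Import Relation_Operators.


Unset Strict Implicit.
Unset Printing Implicit Defensive.

Import GRing.Theory.
Local Open Scope ring_scope.

Section HilbertChart.

Variable r : nat.
Local Notation mono := 'X_{1..r}.

(* A basis set: a finite nonempty set of monomials (given as a duplicate-free
   list) closed under taking divisors; divisibility is (m' <= m)%MM. *)
Definition is_basis_set (beta : seq mono) : Prop :=
  [/\ uniq beta, beta != [::] &
      forall m m' : mono, m \in beta -> (m' <= m)%MM -> m' \in beta].

(* x^d is a minimal generator of I_beta (the ideal generated by the
   monomials outside beta): x^d is not in beta, and every proper divisor
   of x^d lies in beta. *)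
Definition min_generator (beta : seq mono) (d : mono) : Prop :=
  d \notin beta /\ forall d' : mono, (d' <= d)%MM -> d' != d -> d' \in beta.

Definition maximal_elt (beta : seq mono) (j : mono) : Prop :=
  j \in beta /\ forall j' : mono, j' \in beta -> (j <= j')%MM -> j' = j.

Definition is_arrow (beta : seq mono) (a : mono * mono) : Prop :=
  a.1 \notin beta /\ a.2 \in beta.

(* One translation step (d,j) -> (d +- e_i, j +- e_i), the result being an
   arrow (nonnegativity is built in since exponents are natural numbers). *)
Definition translation_step (beta : seq mono) (a a' : mono * mono) : Prop :=
  is_arrow beta a' /\
  exists i : 'I_r,
    (a'.1 = (a.1 + U_(i))%MM /\ a'.2 = (a.2 + U_(i))%MM) \/
    (a.1 = (a'.1 + U_(i))%MM /\ a.2 = (a'.2 + U_(i))%MM).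

Definition translates (beta : seq mono) : mono * mono -> mono * mono -> Prop :=
  clos_refl_trans (mono * mono) (translation_step beta).

Definition border (beta : seq mono) : seq mono :=
  undup [seq x <- [seq (m + U_(i))%MM | m <- beta, i <- enum 'I_r]
        | x \notin beta].

Variable k : fieldType.

(* Polynomial ring in the variables c^b_l, b in the border, l in beta;
   variable (b, l) is 'X_(mxvec_index b l). *)
Definition nvars (beta : seq mono) : nat := (size (border beta) * size beta)%N.
Definition Pring (beta : seq mono) := {mpoly k[nvars beta]}.

Definition cvar (beta : seq mono) (m : mono) (l : 'I_(size beta)) : Pring beta :=
  match (insub (index m (border beta)) : option 'I_(size (border beta))) with
  | Some b => 'X_(mxvec_index b l)
  | None => 0
  end.

(* Generic multiplication matrix of x_i on k[x]/I_t in the basis beta: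
   column jj is the image of x_i * x^(beta_jj). *)
Definition mulmx_gen (beta : seq mono) (i : 'I_r) :
    'M[Pring beta]_(size beta, size beta) :=
  \matrix_(l, jj)
    (let m := (nth 0%MM beta jj + U_(i))%MM in
     if m \in beta then ((nth 0%MM beta l == m)%:R : Pring beta)
     else cvar beta m l).

Definition in_relJ (beta : seq mono) (p : Pring beta) : Prop :=
  exists g : 'I_r -> 'I_r -> 'I_(size beta) -> 'I_(size beta) -> Pring beta,
    p = \sum_(i < r) \sum_(i' < r) \sum_(a < size beta) \sum_(b < size beta)
          g i i' a b *
          (mulmx_gen beta i *m mulmx_gen beta i'
           - mulmx_gen beta i' *m mulmx_gen beta i) a b.

(* The coordinate ring is R = Pring beta / J.  Elements of R are handled
   through representatives in Pring beta. *)

(* Coordinates of x^d mod I_t in the basis beta: X^d e_0, where e_0 is the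
   basis vector of the monomial 1. *)
Definition e_one (beta : seq mono) : 'cV[Pring beta]_(size beta) :=
  \col_l ((nth 0%MM beta l == 0%MM)%:R).

Definition coordvec (beta : seq mono) (d : mono) : 'cV[Pring beta]_(size beta) :=
  foldr (fun i v => iter (d i) (mulmx (mulmx_gen beta i)) v)
        (e_one beta) (enum 'I_r).

(* (a representative in Pring beta of) the function c^d_j in R *)
Definition carrow (beta : seq mono) (a : mono * mono) : Pring beta :=
  \sum_(l < size beta) (nth 0%MM beta l == a.2)%:R * coordvec beta a.1 l ord0.

(* t_beta is the point where all c^b_l vanish (the origin).  M is the
   maximal ideal of t_beta in R: classes of polynomials vanishing there. *)
Definition in_M (beta : seq mono) (f : Pring beta) : Prop :=
  meval (fun _ => 0) f = 0.

Definition in_M2 (beta : seq mono) (f : Pring beta) : Prop :=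
  exists (s : seq (Pring beta * Pring beta)) (h : Pring beta),
    [/\ forall q, q \in s -> in_M beta q.1 /\ in_M beta q.2,
        in_relJ beta h &
        f = \sum_(q <- s) q.1 * q.2 + h].

Definition cotangent_basis (beta : seq mono) (B : mono * mono -> Prop) : Prop :=
  [/\ forall a, B a -> is_arrow beta a,
      forall (s : seq (mono * mono)) (lam : mono * mono -> k),
        uniq s -> (forall a, a \in s -> B a) ->
        in_M2 beta (\sum_(a <- s) lam a *: carrow beta a) ->
        forall a, a \in s -> lam a = 0 &
      forall f : Pring beta, in_M beta f ->
        exists (s : seq (mono * mono)) (lam : mono * mono -> k),
          (forall a, a \in s -> B a) /\
          in_M2 beta (f - \sum_(a <- s) lam a *: carrow beta a)].

End HilbertChart.

Arguments is_basis_set {r}.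
Arguments min_generator {r}.
Arguments maximal_elt {r}.
Arguments is_arrow {r}.
Arguments translation_step {r}.
Arguments translates {r}.
Arguments border {r}.
Arguments nvars {r}.
Arguments Pring {r}.
Arguments cvar {r k}.
Arguments mulmx_gen {r k}.
Arguments in_relJ {r k}.
Arguments e_one {r k}.
Arguments coordvec {r k}.
Arguments carrow {r k}.
Arguments in_M {r k}.
Arguments in_M2 {r k}.
Arguments cotangent_basis {r} k.

From HB Require Import structures.
From mathcomp Require Import all_boot all_order all_algebra.
From mathcomp Require Import mpoly.
From Stdlib Require Import Operators_Properties.

(* Both claims rest on two facts: x_i x^j lies outside beta (x^j is maximal)
   and x^d / x_i lies in beta (x^d is a minimal generator).  They forbid any
   translation step out of (d, j), upwards and downwards respectively.  They
   also make the reduction rule x^d -> X x^j, all other monomials outside beta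
   -> 0, a flat first-order deformation of I_beta over k[X]/(X^2): the
   substitution c^d_j -> X, every other coordinate -> 0 makes the generic
   multiplication matrices commute modulo X^2.  This substitution therefore
   kills J and M^2, so it is a linear form on M/M^2 that is 1 on c^d_j and 0
   on every other arrow; hence no basis of M/M^2 made of arrows avoids c^d_j. *)

Set Implicit Arguments.
Unset Strict Implicit.
Unset Printing Implicit Defensive.

Import GRing.Theory.
Local Open Scope ring_scope.

Section Monomials.
Variable r : nat.
Implicit Types (m : 'X_{1..r}) (i : 'I_r) (beta : seq 'X_{1..r}).

Lemma addmU_neq m i : (m + U_(i))%MM != m.
Proof. by apply/eqP => /(congr1 mdeg)/eqP; rewrite mdegD mdeg1 addn1 gtn_eqF. Qed.

Lemma basis_set_mem0 beta : is_basis_set beta -> 0%MM \in beta.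
Proof.
case: beta => [[_ /eqP //]|m beta [_ _ /(_ m)]]; apply; first exact: mem_head.
by apply/mnm_lepP => i; rewrite mnm0E.
Qed.

Lemma mem_border beta m i :
  m \in beta -> (m + U_(i))%MM \notin beta -> (m + U_(i))%MM \in border beta.
Proof.
move=> mb nb; rewrite mem_undup mem_filter nb /=.
by apply: allpairs_f => //; rewrite mem_enum.
Qed.

Lemma maximal_elt_addU beta j i : maximal_elt beta j -> (j + U_(i))%MM \notin beta.
Proof.
case=> _ jmax; apply/negP => /jmax /(_ (lem_addr _ _)) /eqP.
by rewrite (negbTE (addmU_neq _ _)).
Qed.

Lemma min_generator_addU beta m i : min_generator beta (m + U_(i))%MM -> m \in beta.
Proof. by case=> _; apply; [exact: lem_addr | rewrite eq_sym addmU_neq]. Qed.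

Lemma min_generator_border beta d :
  is_basis_set beta -> min_generator beta d -> d \in border beta.
Proof.
move=> bs dmin; have d_neq0 : d != 0%MM.
  by apply: contraNneq dmin.1 => ->; exact: basis_set_mem0.
have [i di] : exists i, d i != 0%N.
  apply/existsP; apply: contra_neqT d_neq0 => /existsPn d0.
  by apply/mnmP => i; rewrite mnm0E; apply/eqP/negPn.
have d_eq : (d - U_(i) + U_(i))%MM = d by rewrite submK ?lep1mP.
rewrite -d_eq mem_border ?d_eq //; last exact: dmin.1.
by apply: (@min_generator_addU _ _ i); rewrite d_eq.
Qed.

Lemma translates_min_generator_maximal_elt beta d j a :
  min_generator beta d -> maximal_elt beta j -> translates beta (d, j) a -> a = (d, j).
Proof.
move=> dmin jmax /clos_rt_rt1n_iff [//|a' a'' [[a1_nb a2_b] [i [[_ a2E]|[a1E _]]]] _].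
- by case/negP: (@maximal_elt_addU _ _ i jmax); rewrite -a2E.
- by case/negP: a1_nb; apply: (@min_generator_addU _ _ i); rewrite -a1E.
Qed.

End Monomials.

Lemma eq_mxvec_index m n (a b : 'I_m) (c e : 'I_n) :
  (mxvec_index a c == mxvec_index b e) = (a == b) && (c == e).
Proof.
by rewrite (inj_eq (@cast_ord_inj _ _ _)) (inj_eq enum_rank_inj) xpair_eqE.
Qed.

Lemma sum_nth_mul_eq (R : pzSemiRingType) (T : eqType) (x0 : T) (s : seq T)
    (G : T -> R) (x : T) :
  uniq s ->
  \sum_(c < size s) G (nth x0 s c) * (nth x0 s c == x)%:R = (x \in s)%:R * G x.
Proof.
move=> s_uniq; have [x_in|x_notin] := boolP (x \in s); last first.
  rewrite mul0r big1 // => c _; case: eqP => [xE|_]; last exact: mulr0.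
  by case/negP: x_notin; rewrite -xE mem_nth.
have x_idx : (index x s < size s)%N by rewrite index_mem.
rewrite (bigD1 (Ordinal x_idx)) //= nth_index // eqxx mulr1 mul1r big1 ?addr0 //.
move=> c /eqP c_neq; case: eqP => [xE|_]; last exact: mulr0.
by case: c_neq; apply: val_inj; rewrite /= -xE index_uniq.
Qed.

Lemma dvdp_sum (R : idomainType) (D : {poly R}) (I : Type) (s : seq I) (P : pred I)
    (F : I -> {poly R}) :
  (forall i, P i -> D %| F i) -> D %| \sum_(i <- s | P i) F i.
Proof. by move=> DF; apply: (big_ind (dvdp D)); [exact: dvdp0 | exact: dvdp_add | ]. Qed.

Section CongruenceModX2.
Variables (R : idomainType) (n : nat).
Implicit Types u w : 'cV[{poly R}]_n.

Definition eqmodX2 u w := forall l, 'X^2 %| u l 0 - w l 0.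

Lemma eqmodX2_trans w u v : eqmodX2 u w -> eqmodX2 w v -> eqmodX2 u v.
Proof. by move=> uw wv l; rewrite -(subrKA (w l 0)); exact: dvdp_add. Qed.

Lemma eqmodX2_mul2l (M : 'M_n) u w : eqmodX2 u w -> eqmodX2 (M *m u) (M *m w).
Proof.
move=> uw l; rewrite !mxE -sumrB; apply: dvdp_sum => c _.
by rewrite -mulrBr dvdp_mull.
Qed.

End CongruenceModX2.

Section TangentVector.
Variables (k : fieldType) (r : nat) (beta : seq 'X_{1..r}) (d j : 'X_{1..r}).
Hypotheses (beta_basis : is_basis_set beta) (d_min : min_generator beta d)
  (j_max : maximal_elt beta j).

Local Notation nthb := (nth 0%MM beta).
Implicit Types (m : 'X_{1..r}) (i : 'I_r) (c l : 'I_(size beta)).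

Let beta_uniq : uniq beta. Proof. by case: beta_basis. Qed.
Let d_notin : d \notin beta. Proof. by case: d_min. Qed.
Let j_in : j \in beta. Proof. by case: j_max. Qed.
Let d_border : d \in border beta. Proof. exact: min_generator_border. Qed.

Lemma nthb_neq m c : m \notin beta -> (nthb c == m) = false.
Proof. by apply: contraNF => /eqP <-; rewrite mem_nth. Qed.

Definition cdj_var : 'I_(nvars beta) :=
  mxvec_index (Ordinal (etrans (index_mem d _) d_border))
              (Ordinal (etrans (index_mem j _) j_in)).

(* Modulo X^2, the tangent vector at t_beta in the direction of c^d_j. *)
Definition psi (p : Pring k beta) : {poly k} :=
  mmap (@polyC k) (fun v => (v == cdj_var)%:R * 'X) p.
HB.instance Definition _ := GRing.RMorphism.copy psi (mmap (@polyC k) _).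

Local Notation Y i := (map_mx psi (mulmx_gen beta i)).

Lemma psi_cvar m l : m \in border beta ->
  psi (cvar beta m l) = (m == d)%:R * 'X * (nthb l == j)%:R.
Proof.
move=> m_border; rewrite /cvar insubT ?index_mem // => m_idx /=.
rewrite /psi mmapX mmap1U eq_mxvec_index.
have -> : (Ordinal m_idx == Ordinal (etrans (index_mem d _) d_border)) = (m == d).
  rewrite -val_eqE /=; apply/eqP/eqP => [idxE|->] //.
  by rewrite -(nth_index 0%MM m_border) idxE nth_index.
have -> : (l == Ordinal (etrans (index_mem j _) j_in)) = (nthb l == j).
  rewrite -val_eqE /=; apply/eqP/eqP => [->|<-]; first by rewrite nth_index.
  by rewrite index_uniq.
by case: (m == d); case: (nthb l == j); rewrite /= ?(mul0r, mul1r, mulr0, mulr1).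
Qed.

Definition ecol (m : 'X_{1..r}) : 'cV[{poly k}]_(size beta) :=
  \col_l (nthb l == m)%:R.

(* Coordinates of x^m in the basis beta under the deformed reduction rule. *)
Definition dcoord (m : 'X_{1..r}) : 'cV[{poly k}]_(size beta) :=
  ecol m + ((m == d)%:R * 'X) *: ecol j.

Lemma ecol_nth c : ecol (nthb c) = delta_mx c 0.
Proof. by apply/colP => l; rewrite !mxE nth_uniq // eqxx andbT. Qed.

Lemma ecol_notin m : m \notin beta -> ecol m = 0.
Proof. by move=> m_notin; apply/colP => l; rewrite !mxE nthb_neq. Qed.

Lemma dcoord_nth c : dcoord (nthb c) = delta_mx c 0.
Proof. by rewrite /dcoord ecol_nth nthb_neq // mul0r scale0r addr0. Qed.

Lemma dcoord_addU_notin m i : m \notin beta -> dcoord (m + U_(i)) = 0.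
Proof.
move=> m_notin; have mU_notin : (m + U_(i))%MM \notin beta.
  apply: contra m_notin => mU_in.
  by case: beta_basis => _ _ /(_ _ _ mU_in); apply; exact: lem_addr.
have mU_neq : ((m + U_(i))%MM == d) = false.
  apply: contraNF m_notin => /eqP mUd.
  by apply: (@min_generator_addU _ _ _ i); rewrite mUd.
by rewrite /dcoord ecol_notin // mU_neq mul0r scale0r addr0.
Qed.

Lemma X_dvd_dcoord_notin m l : m \notin beta -> 'X %| dcoord m l 0.
Proof. by move=> m_notin; rewrite /dcoord ecol_notin // add0r !mxE mulrAC dvdp_mull. Qed.

Lemma psi_mulmx_gen i l c : Y i l c = dcoord (nthb c + U_(i)) l 0.
Proof.
rewrite /dcoord !mxE /=; case: ifP => [mU_in|mU_notin].
  have -> : ((nthb c + U_(i))%MM == d) = false by apply: contraTF mU_in => /eqP ->.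
  by rewrite rmorph_nat !mul0r addr0.
rewrite psi_cvar; last by rewrite mem_border ?mU_notin ?mem_nth.
by rewrite (nthb_neq _ (negbT mU_notin)) add0r.
Qed.

Lemma psi_mulmx_gen_ecol i m : Y i *m ecol m = (m \in beta)%:R *: dcoord (m + U_(i)).
Proof.
apply/colP => l; rewrite mxE [RHS]mxE.
under eq_bigr do rewrite psi_mulmx_gen [ecol _ _ _]mxE.
exact: (@sum_nth_mul_eq _ _ _ _ (fun x => dcoord (x + U_(i)) l 0)).
Qed.

Lemma psi_mulmx_gen_dcoord i m :
  eqmodX2 (Y i *m dcoord m) (dcoord (m + U_(i))).
Proof.
move=> l; rewrite mulmxDr -scalemxAr !psi_mulmx_gen_ecol j_in scale1r.
have X2_dvd_tail : 'X^2 %| ((m == d)%:R * 'X *: dcoord (j + U_(i))) l 0.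
  rewrite mxE expr2; apply: dvdp_mul.
  - by rewrite dvdp_mulIr.
  - exact/X_dvd_dcoord_notin/maximal_elt_addU.
have [m_in|m_notin] := boolP (m \in beta).
  by rewrite scale1r mxE [X in X - _]addrC addrK.
by rewrite dcoord_addU_notin // scaler0 add0r [X in _ - X]mxE subr0.
Qed.

Lemma psi_iter_mulmx_gen i n w m :
  eqmodX2 (map_mx psi w) (dcoord m) ->
  eqmodX2 (map_mx psi (iter n (mulmx (mulmx_gen beta i)) w)) (dcoord (m + U_(i) *+ n)).
Proof.
move=> wm; elim: n => [|n IHn] /=; first by rewrite mulm0n addm0.
rewrite map_mxM mulmSr addmA; apply: eqmodX2_trans (psi_mulmx_gen_dcoord _ _).
exact: eqmodX2_mul2l.
Qed.

Lemma psi_coordvec m : eqmodX2 (map_mx psi (coordvec beta m)) (dcoord m).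
Proof.
suff /(_ (enum 'I_r)) : forall s, eqmodX2
    (map_mx psi (foldr (fun i w => iter (m i) (mulmx (mulmx_gen beta i)) w)
                       (e_one beta) s))
    (dcoord (\sum_(i <- s) U_(i) *+ m i)%MM).
  by rewrite big_enum /= -multinomUE_id.
elim=> [|i s IHs] /=; last by rewrite big_cons addmC; exact: psi_iter_mulmx_gen IHs.
have zero_neq_d : (0%MM == d) = false.
  by apply: contraNF d_notin => /eqP <-; exact: basis_set_mem0.
move=> l; rewrite big_nil /dcoord zero_neq_d mul0r scale0r addr0 !mxE rmorph_nat.
by rewrite subrr dvdp0.
Qed.

Lemma psi_commutator i i' a b :
  'X^2 %| psi ((mulmx_gen beta i *m mulmx_gen beta i'
                - mulmx_gen beta i' *m mulmx_gen beta i) a b).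
Proof.
have entry_dcoord (M N : 'M_(size beta)) :
    (M - N) a b = (M *m dcoord (nthb b)) a 0 - (N *m dcoord (nthb b)) a 0.
  by rewrite dcoord_nth -!colE !mxE.
have YY_dcoord i1 i2 : eqmodX2 (Y i1 *m Y i2 *m dcoord (nthb b))
                               (dcoord (nthb b + U_(i2) + U_(i1))).
  rewrite -mulmxA; apply: eqmodX2_trans (psi_mulmx_gen_dcoord _ _).
  exact/eqmodX2_mul2l/psi_mulmx_gen_dcoord.
set C := (_ - _); have -> : psi (C a b) = map_mx psi C a b by rewrite [RHS]mxE.
rewrite map_mxB !map_mxM entry_dcoord.
have := dvdp_sub (YY_dcoord i i' a) (YY_dcoord i' i a).
by rewrite -!addmA [(U_(i) + _)%MM]addmC opprB addrA subrK.
Qed.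

Lemma psi_relJ h : in_relJ beta h -> 'X^2 %| psi h.
Proof.
case=> g ->; do 4 (rewrite rmorph_sum; apply: dvdp_sum => ? _).
by rewrite rmorphM dvdp_mull // psi_commutator.
Qed.

Lemma psi_coef0 p : (psi p)`_0 = meval (fun _ => 0) p.
Proof.
rewrite -horner_coef0 /psi /meval /mmap horner_sum; apply: eq_bigr => m _.
rewrite hornerCM /mmap1 horner_prod; congr (_ * _); apply: eq_bigr => v _.
by rewrite horner_exp hornerMX mulr0.
Qed.

Lemma in_M_psi f : in_M beta f <-> 'X %| psi f.
Proof.
rewrite /in_M -psi_coef0 -horner_coef0 -[X in X %| _]subr0 -polyC0 dvdp_XsubCl.
by split=> /eqP.
Qed.

Lemma psi_M2 f : in_M2 beta f -> 'X^2 %| psi f.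
Proof.
case=> s [h [sM hJ ->]]; rewrite rmorphD rmorph_sum dvdp_add ?psi_relJ //.
rewrite big_seq dvdp_sum // => q /sM [/in_M_psi q1 /in_M_psi q2].
by rewrite rmorphM expr2 dvdp_mul.
Qed.

Lemma psi_carrow a : is_arrow beta a ->
  'X^2 %| psi (carrow beta a) - (a == (d, j))%:R * 'X.
Proof.
case: a => a1 a2 [/= a1_notin a2_in].
have [c ->] : exists c, a2 = nthb c.
  by exists (Ordinal (etrans (index_mem _ _) a2_in)); rewrite nth_index.
have -> : psi (carrow beta (a1, nthb c)) = map_mx psi (coordvec beta a1) c 0.
  rewrite rmorph_sum (bigD1 c) //= big1 ?addr0 => [|l l_neq];
    rewrite rmorphM rmorph_nat.
    by rewrite eqxx mul1r mxE.
  by rewrite nth_uniq // val_eqE (negbTE l_neq) mul0r.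
have := psi_coordvec a1 c; rewrite /dcoord !mxE (nthb_neq _ a1_notin) add0r.
by rewrite xpair_eqE -mulnb natrM mulrAC.
Qed.

Lemma cotangent_basis_mem B : cotangent_basis k beta B -> B (d, j).
Proof.
case=> B_arrow _ B_span.
have psi_cdj : 'X^2 %| psi (carrow beta (d, j)) - 'X.
  by have := @psi_carrow (d, j) (conj d_notin j_in); rewrite eqxx mul1r.
have cdj_M : in_M beta (carrow beta (d, j) : Pring k beta).
  apply/in_M_psi; rewrite -(subrK 'X (psi _)) dvdp_add //.
  by apply: dvdp_trans psi_cdj; rewrite expr2 dvdp_mulr.
have [s [lam [sB cdj_span]]] := B_span _ cdj_M.
have [/sB //|dj_notin] := boolP ((d, j) \in s).
have psi_span : 'X^2 %| psi (\sum_(a <- s) lam a *: carrow beta a).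
  rewrite rmorph_sum big_seq dvdp_sum // => a a_s.
  rewrite -mul_mpolyC rmorphM dvdp_mull //.
  have := psi_carrow (B_arrow _ (sB _ a_s)).
  by rewrite (negbTE (memPn dj_notin _ a_s)) mul0r subr0.
have psi_cdj2 : 'X^2 %| psi (carrow beta (d, j)).
  by rewrite -(subrK (\sum_(a <- s) lam a *: carrow beta a) (carrow _ _)) rmorphD
             dvdp_add // psi_M2.
have := dvdp_sub psi_cdj2 psi_cdj.
rewrite subKr => /(dvdp_leq (negbT (polyX_eq0 _))).
by rewrite size_polyXn size_polyX.
Qed.

End TangentVector.

Theorem lemma5p2 (k : closedFieldType) (r : nat) (beta : seq 'X_{1..r})
    (d j : 'X_{1..r}) :
  is_basis_set beta ->
  is_arrow beta (d, j) ->
  min_generator beta d ->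
  maximal_elt beta j ->
  (forall a' : 'X_{1..r} * 'X_{1..r}, translates beta (d, j) a' -> a' = (d, j)) /\
  (forall B : 'X_{1..r} * 'X_{1..r} -> Prop,
     cotangent_basis k beta B -> B (d, j)).
Proof.
(* The arrow hypothesis follows from the other two. *)
move=> beta_basis _ d_min j_max; split.
- by move=> a; apply: translates_min_generator_maximal_elt.
- by move=> B; apply: cotangent_basis_mem.
Qed.
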